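(* Let $G$ be a finite, simple, connected $(q+1)$-regular graph with $n$ vertices and $m$ edges, let $a\in[0,1]$ and $b\in\mathbb R$, and let $\tilde{\mathbf U}$ be the generalized Grover matrix of $G$ with parameters $a,b$. Then \begin{align*} \det(\lambda\mathbf I_{2m}-\tilde{\mathbf U})&=(\lambda^2-b^2)^{m-n}\det\Big(\{\lambda^2+b((1-q)a+bq)\}\mathbf I_n-\lambda((1-q)a+b(q+1))\mathbf P(G)\Big)\\ &=(\lambda^2-b^2)^{m-n}\det\Big(\{\lambda^2-\lambda((1-q)a+b(q+1))+b((1-q)a+bq)\}\mathbf I_n+\lambda\Big(b-\frac{q-1}{q+1}a\Big)\Delta\Big), \end{align*} where $\Delta=\mathbf D-\mathbf A(G)$ is the Laplacian of $G$.
   Context: $D(G)$ is the set of $2m$ arcs of $G$ (for each edge $uv$, both $(u,v)$ and $(v,u)$); for $e=(u,v)$, $o(e)=u$, $t(e)=v$, $e^{-1}=(v,u)$, and $d_v=\deg v$. The generalized Grover matrix $\tilde{\mathbf U}=(\tilde U_{ef})_{e,f\in D(G)}$ has $\tilde U_{ef}=(2/d_{t(f)}-1)a+b$ if $t(f)=o(e)$ and $f\ne e^{-1}$; $\tilde U_{ef}=(2/d_{t(f)}-1)a$ if $f=e^{-1}$; $0$ otherwise. $\mathbf P(G)$ has entries $P_{uv}=1/\deg u$ if $u,v$ adjacent and $0$ otherwise; $\mathbf D$ is the diagonal degree matrix and $\mathbf A(G)$ the adjacency matrix. *)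

From HB Require Import structures.
From mathcomp Require Import all_boot all_order all_algebra.
From mathcomp Require Import all_classical all_reals.
Set Implicit Arguments. Unset Strict Implicit. Unset Printing Implicit Defensive.
Import Order.TTheory GRing.Theory Num.Theory.
Local Open Scope ring_scope.

Definition simple_graph (n : nat) (adj : rel 'I_n) : Prop :=
  symmetric adj /\ irreflexive adj.

Definition connected_graph (n : nat) (adj : rel 'I_n) : Prop :=
  forall u v : 'I_n, connect adj u v.

Definition deg (n : nat) (adj : rel 'I_n) (v : 'I_n) : nat :=
  #|[set w | adj v w]|.

Definition regular (n : nat) (adj : rel 'I_n) (k : nat) : Prop :=
  forall v : 'I_n, deg adj v = k.

(* D(G): the set of arcs (u,v), both orientations of each edge; #|arcs| = 2m *)
Definition arcs (n : nat) (adj : rel 'I_n) : {set 'I_n * 'I_n} :=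
  [set x : 'I_n * 'I_n | adj x.1 x.2].

Definition nedges (n : nat) (adj : rel 'I_n) : nat :=
  #|[set x : 'I_n * 'I_n | adj x.1 x.2 & (x.1 < x.2)%N]|.

Definition arc_of (n : nat) (adj : rel 'I_n) (i : 'I_#|arcs adj|) : 'I_n * 'I_n :=
  enum_val i.

Definition grover (R : realType) (n : nat) (adj : rel 'I_n) (a b : R)
  : 'M[R]_#|arcs adj| :=
  \matrix_(i, j)
    let e := arc_of i in let f := arc_of j in
    let c := (2 / (deg adj f.2)%:R - 1) * a in
    if f == (e.2, e.1) then c
    else if f.2 == e.1 then c + b
    else 0.

Definition transP (R : realType) (n : nat) (adj : rel 'I_n) : 'M[R]_n :=
  \matrix_(u, v) if adj u v then ((deg adj u)%:R)^-1 else 0.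

Definition degmx (R : realType) (n : nat) (adj : rel 'I_n) : 'M[R]_n :=
  \matrix_(u, v) if u == v then (deg adj u)%:R else 0.

Definition adjmx (R : realType) (n : nat) (adj : rel 'I_n) : 'M[R]_n :=
  \matrix_(u, v) if adj u v then 1 else 0.

Definition laplacian (R : realType) (n : nat) (adj : rel 'I_n) : 'M[R]_n :=
  degmx R adj - adjmx R adj.

From HB Require Import structures.
From mathcomp Require Import all_boot all_order all_algebra.
From mathcomp Require Import all_classical all_reals.
From mathcomp Require Import ring zify.
Set Implicit Arguments. Unset Strict Implicit. Unset Printing Implicit Defensive.
Import Order.TTheory GRing.Theory Num.Theory.
Local Open Scope ring_scope.

(* The Grover matrix factors as U = beta L K^T - b J with beta = (2/(q+1) - 1) a + b, where
   L and K send an arc to its source and its target and J reverses arcs; then J^2 = 1,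
   J L = K, K^T K = (q+1) I and K^T L = A.  Multiplying lam - U on the left by lam - b J gives
   (lam^2 - b^2) I - beta (lam - b J) L K^T, and Sylvester's identity
   x^r det(x I + X Y) = x^p det(x I + Y X) moves the determinant to the n x n matrix
   (lam^2 - b^2 + beta b (q+1)) I - lam beta A.  The factor det(lam - b J) = (lam^2 - b^2)^m
   comes from the same identity applied to the arc-edge incidence matrix N, since
   N N^T = I + J and N^T N = 2 I.  Working over R[lam] gives a polynomial identity, from which
   the power of lam^2 - b^2 can be cancelled even at lam = +-b as long as m >= n. *)

Lemma sylvester_det (R : comNzRingType) p r (x : R) (X : 'M_(p, r)) (Y : 'M_(r, p)) :
  x ^+ r * \det (x%:M + X *m Y) = x ^+ p * \det (x%:M + Y *m X).
Proof.
pose M := block_mx x%:M (- X) Y 1%:M.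
have M_ldecomp : M = block_mx (x%:M + X *m Y) (- X) 0 1%:M *m block_mx 1%:M 0 Y 1%:M.
  by rewrite mulmx_block ?mulmx1 ?mul1mx ?mulmx0 ?mul0mx ?addr0 ?add0r mulNmx addrK.
have M_rdecomp : block_mx 1%:M 0 (- Y) x%:M *m M = block_mx x%:M (- X) 0 (x%:M + Y *m X).
  rewrite mulmx_block ?mulmx1 ?mul1mx ?mul0mx ?addr0 mul_scalar_mx mul_mx_scalar.
  by rewrite mulNmx mulmxN opprK scalerN addNr addrC.
have := congr1 determinant M_rdecomp.
rewrite det_mulmx det_lblock det_ublock det1 mul1r det_scalar M_ldecomp det_mulmx.
by rewrite det_ublock det_lblock !det1 !mulr1 det_scalar => ->.
Qed.

Lemma det_scalar_addZ_gram (R : comNzRingType) k p (N : 'M[R]_(k, p)) (J : 'M_k) (lam c : R) :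
  N *m N^T = 1%:M + J -> N^T *m N = 2%:M ->
  (lam - c) ^+ p * \det (lam%:M + c *: J) = (lam - c) ^+ k * (lam + c) ^+ p.
Proof.
move=> NNt NtN.
have -> : lam%:M + c *: J = (lam - c)%:M + (c *: N) *m N^T.
  rewrite -scalemxAl NNt scalerDr scale_scalar_mx mulr1 addrA -raddfD /=.
  by rewrite subrK.
rewrite sylvester_det -scalemxAr NtN scale_scalar_mx -raddfD det_scalar /=.
by congr (_ * _ ^+ _); ring.
Qed.

Section ReversalReduction.

Variables (R : comNzRingType) (k n : nat).
Variables (J : 'M[R]_k) (L K : 'M[R]_(k, n)) (A : 'M[R]_n) (d : R).
Hypotheses (JJ : J *m J = 1%:M) (JL : J *m L = K).
Hypotheses (KtK : K^T *m K = d%:M) (KtL : K^T *m L = A).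

Lemma det_reversal_reduction (lam b beta : R) :
  let s := lam ^+ 2 - b ^+ 2 in
  s ^+ n * (\det (lam%:M - b *: J) * \det (lam%:M - (beta *: (L *m K^T) - b *: J))) =
  s ^+ k * \det ((s + beta * b * d)%:M - (lam * beta) *: A).
Proof.
move=> s; pose X := - beta *: (lam *: L - b *: K).
have factor : (lam%:M - b *: J) *m (lam%:M - (beta *: (L *m K^T) - b *: J)) =
              s%:M + X *m K^T.
  rewrite !(mulmxBl, mulmxBr) !(mul_scalar_mx, mul_mx_scalar).
  rewrite -!scalemxAl -!scalemxAr mulmxA JL JJ mulmxBl -!scalemxAl.
  set P := L *m K^T; set Q := K *m K^T. (* hidden from [mxE], which would expand them *)
  apply/matrixP => i j; rewrite !mxE /s.
  by case: (i == j); rewrite /= ?mulr1n ?mulr0n; ring.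
have swap : K^T *m X = (beta * b * d)%:M - (lam * beta) *: A.
  rewrite -scalemxAr mulmxBr -!scalemxAr KtK KtL.
  apply/matrixP => i j; rewrite !mxE.
  by case: (i == j); rewrite ?mulr1n ?mulr0n; ring.
by rewrite -det_mulmx factor sylvester_det swap addrA -raddfD.
Qed.

End ReversalReduction.

Lemma det_reversal_reduction_cancel (R : idomainType) k p n (N : 'M[R]_(k, p))
    (J : 'M_k) (L K : 'M_(k, n)) (A : 'M_n) (d lam b beta : R) :
  k = (p + p)%N -> N *m N^T = 1%:M + J -> N^T *m N = 2%:M ->
  J *m J = 1%:M -> J *m L = K -> K^T *m K = d%:M -> K^T *m L = A ->
  lam - b != 0 -> lam + b != 0 ->
  let s := lam ^+ 2 - b ^+ 2 in
  s ^+ n * \det (lam%:M - (beta *: (L *m K^T) - b *: J)) =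
  s ^+ p * \det ((s + beta * b * d)%:M - (lam * beta) *: A).
Proof.
move=> k_eq; subst k => NNt NtN JJ JL KtK KtL sub_neq0 add_neq0 s.
have s_factor : s = (lam - b) * (lam + b) by rewrite /s; ring.
have s_neq0 : s != 0 by rewrite s_factor mulf_neq0.
have detJ : \det (lam%:M - b *: J) = s ^+ p.
  apply: (mulfI (expf_neq0 p add_neq0)).
  have := det_scalar_addZ_gram lam (- b) NNt NtN.
  rewrite opprK scaleNr => ->.
  by rewrite s_factor exprD exprMn; ring.
have /= := det_reversal_reduction JJ JL KtK KtL lam b beta.
by rewrite -/s detJ exprD mulrCA -mulrA => /(mulfI (expf_neq0 p s_neq0)).
Qed.

Lemma sum_pred1_mulr (R : pzSemiRingType) (T : finType) (P : pred T) (z : T) (F : T -> R) :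
  P z -> \sum_(x | P x) (x == z)%:R * F x = F z.
Proof.
move=> Pz; rewrite (bigD1 z) //= eqxx mul1r big1 ?addr0 // => x /andP[_ /negbTE ->].
by rewrite mul0r.
Qed.

Lemma sum_enum_val (R : pzSemiRingType) (T : finType) (A : {set T}) (F : T -> R) :
  \sum_(i < #|A|) F (enum_val i) = \sum_(x in A) F x.
Proof. by rewrite [RHS]big_enum_val. Qed.

Section ArcMatrices.

Variables (R : comNzRingType) (n : nat) (adj : rel 'I_n).
Hypotheses (sym : symmetric adj) (irr : irreflexive adj).

Definition rev_arc (x : 'I_n * 'I_n) := (x.2, x.1).

Definition edge_of_arc (x : 'I_n * 'I_n) := if (x.1 < x.2)%N then x else rev_arc x.

Definition edges := [set x : 'I_n * 'I_n | adj x.1 x.2 & (x.1 < x.2)%N].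

Definition arc_edge_mx : 'M[R]_(#|arcs adj|, #|edges|) :=
  \matrix_(i, j) (edge_of_arc (arc_of i) == enum_val j)%:R.

Definition arc_rev_mx : 'M[R]_#|arcs adj| :=
  \matrix_(i, j) (arc_of j == rev_arc (arc_of i))%:R.

Definition arc_source_mx : 'M[R]_(#|arcs adj|, n) := \matrix_(i, v) ((arc_of i).1 == v)%:R.

Definition arc_target_mx : 'M[R]_(#|arcs adj|, n) := \matrix_(i, v) ((arc_of i).2 == v)%:R.

Lemma rev_arcK : involutive rev_arc. Proof. by case. Qed.

Lemma arc_of_inj : injective (@arc_of n adj). Proof. exact: enum_val_inj. Qed.

Lemma sum_arcs_pair (F : 'I_n * 'I_n -> R) :
  \sum_(x in arcs adj) F x = \sum_u \sum_v (adj u v)%:R * F (u, v).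
Proof.
rewrite pair_big big_mkcond /=; apply: eq_bigr => -[u v] _.
by rewrite inE /=; case: adj; rewrite ?mul1r ?mul0r.
Qed.

Lemma rev_arc_arcs x : x \in arcs adj -> rev_arc x \in arcs adj.
Proof. by rewrite !inE /= sym. Qed.

Lemma arc_ends_neq x : x \in arcs adj -> x.1 != x.2.
Proof. by rewrite inE; apply: contraTneq => ->; rewrite irr. Qed.

Lemma rev_arc_neq x : x \in arcs adj -> (x == rev_arc x) = false.
Proof.
case: x => u v /arc_ends_neq /= uv; rewrite /rev_arc xpair_eqE /=.
by apply: contraNF uv => /andP[/eqP ->].
Qed.

Lemma edge_of_arc_eq (x y : 'I_n * 'I_n) : x.1 != x.2 -> y.1 != y.2 ->
  (edge_of_arc x == edge_of_arc y) = (x == y) || (x == rev_arc y).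
Proof.
case: x y => [[x1 ?] [x2 ?]] [[y1 ?] [y2 ?]]; rewrite /edge_of_arc /rev_arc /=.
rewrite -!val_eqE /= => x_neq y_neq.
by case: ifP => ?; case: ifP => ? /=; rewrite !xpair_eqE -!val_eqE /=; apply/idP/idP; lia.
Qed.

Lemma edge_of_arc_edges x : x \in arcs adj -> edge_of_arc x \in edges.
Proof.
move=> xa; have := arc_ends_neq xa; move: xa; rewrite !inE /edge_of_arc.
case: x => u v /= uv; case: ltnP => [-> | vu]; rewrite ?uv //= sym uv /=.
by rewrite -val_eqE /= ltn_neqAle eq_sym vu andbT.
Qed.

Lemma edges_arcs z : z \in edges -> z \in arcs adj.
Proof. by rewrite !inE => /andP[]. Qed.

Lemma edge_of_arcE x z : x \in arcs adj -> z \in edges ->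
  (edge_of_arc x == z) = (x == z) || (x == rev_arc z).
Proof.
move=> xa ze; have z_neq := arc_ends_neq (edges_arcs ze).
rewrite -(edge_of_arc_eq (arc_ends_neq xa) z_neq); congr (_ == _).
by move: ze; rewrite inE /edge_of_arc => /andP[_ ->].
Qed.

Lemma card_arcs : #|arcs adj| = (#|edges| + #|edges|)%N.
Proof.
rewrite -(cardsID [set x : 'I_n * 'I_n | (x.1 < x.2)%N] (arcs adj)).
have -> : arcs adj :&: [set x : 'I_n * 'I_n | (x.1 < x.2)%N] = edges.
  by apply/setP => x; rewrite !inE.
congr (_ + _); rewrite -[RHS](card_imset _ (can_inj rev_arcK)); congr #|pred_of_set _|.
apply/setP => -[u v]; rewrite !inE /=; apply/andP/imsetP => [[]|].
  rewrite -leqNgt leq_eqVlt => /orP[/eqP/val_inj vu|vu] uv; first by rewrite vu irr in uv.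
  by exists (v, u); rewrite // inE /= sym uv.
by case=> -[u' v']; rewrite inE /= => /andP[uv' lt] [-> ->]; rewrite sym uv' -leqNgt ltnW.
Qed.

Lemma arc_edge_mx_gram : arc_edge_mx *m arc_edge_mx^T = 1%:M + arc_rev_mx.
Proof.
apply/matrixP => i i'; rewrite !mxE; under eq_bigr do rewrite !mxE.
have xa := enum_valP i; have xa' := enum_valP i'.
rewrite (sum_enum_val edges (fun z => (edge_of_arc (arc_of i) == z)%:R *
                                (edge_of_arc (arc_of i') == z)%:R)).
under eq_bigr do rewrite eq_sym.
rewrite sum_pred1_mulr ?edge_of_arc_edges // eq_sym edge_of_arc_eq ?arc_ends_neq //.
rewrite (inj_eq arc_of_inj) eq_sym; have [<-|_] := eqVneq i i'.
  by rewrite rev_arc_neq ?addr0.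
by rewrite add0r -(can2_eq rev_arcK rev_arcK) eq_sym.
Qed.

Lemma sum_edge_of_arc z : z \in edges -> \sum_(x in arcs adj) (edge_of_arc x == z)%:R = 2 :> R.
Proof.
move=> ze; rewrite (eq_bigr (fun x => (x == z)%:R * 1 + (x == rev_arc z)%:R * 1)) => [|x xa].
  by rewrite big_split /= !sum_pred1_mulr ?rev_arc_arcs ?edges_arcs.
rewrite edge_of_arcE // !mulr1; have [->|_] := eqVneq x z; last by rewrite add0r.
by rewrite rev_arc_neq ?edges_arcs ?addr0.
Qed.

Lemma arc_edge_mx_tr_gram : arc_edge_mx^T *m arc_edge_mx = 2%:M.
Proof.
apply/matrixP => j j'; rewrite !mxE; under eq_bigr do rewrite !mxE.
rewrite (sum_enum_val (arcs adj) (fun x => (edge_of_arc x == enum_val j)%:R *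
                                            (edge_of_arc x == enum_val j')%:R)).
have [<-|ne] := eqVneq j j'.
  under eq_bigr do rewrite -natrM mulnb andbb.
  by rewrite sum_edge_of_arc ?enum_valP.
rewrite mulr0n big1 // => x _.
have [->|] := eqVneq (edge_of_arc x) (enum_val j); last by rewrite mul0r.
by rewrite (inj_eq enum_val_inj) (negbTE ne) mulr0.
Qed.

Lemma arc_rev_mxK : arc_rev_mx *m arc_rev_mx = 1%:M.
Proof.
apply/matrixP => i i'; rewrite !mxE; under eq_bigr do rewrite !mxE.
rewrite (sum_enum_val (arcs adj) (fun x => (x == rev_arc (arc_of i))%:R *
                                            (arc_of i' == rev_arc x)%:R)).
by rewrite sum_pred1_mulr ?rev_arc_arcs ?enum_valP // rev_arcK (inj_eq arc_of_inj) eq_sym.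
Qed.

Lemma arc_rev_mx_source : arc_rev_mx *m arc_source_mx = arc_target_mx.
Proof.
apply/matrixP => i v; rewrite !mxE; under eq_bigr do rewrite !mxE.
rewrite (sum_enum_val (arcs adj) (fun x => (x == rev_arc (arc_of i))%:R * (x.1 == v)%:R)).
by rewrite sum_pred1_mulr ?rev_arc_arcs ?enum_valP.
Qed.

Lemma arc_target_mx_gram d : regular adj d -> arc_target_mx^T *m arc_target_mx = d%:R%:M.
Proof.
move=> reg; apply/matrixP => u v; rewrite !mxE; under eq_bigr do rewrite !mxE.
rewrite (sum_enum_val (arcs adj) (fun x => (x.2 == u)%:R * (x.2 == v)%:R)) sum_arcs_pair /=.
have [<-|uv] := eqVneq u v; last first.
  rewrite mulr0n big1 // => w _; rewrite big1 // => v' _.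
  by have [->|] := eqVneq v' u; rewrite ?(negbTE uv) ?mul0r ?mulr0.
rewrite mulr1n -(reg u) /deg -sum1_card natr_sum [RHS]big_mkcond /=.
apply: eq_bigr => w _; under eq_bigr do rewrite -natrM mulnb andbb mulrC.
by rewrite sum_pred1_mulr // inE sym; case: adj.
Qed.

Lemma arc_target_source_mx :
  arc_target_mx^T *m arc_source_mx = \matrix_(u, v) (adj u v)%:R.
Proof.
apply/matrixP => u v; rewrite !mxE; under eq_bigr do rewrite !mxE.
rewrite (sum_enum_val (arcs adj) (fun x => (x.2 == u)%:R * (x.1 == v)%:R)) sum_arcs_pair /=.
under eq_bigr do under eq_bigr do rewrite mulrCA.
under eq_bigr do rewrite sum_pred1_mulr // mulrC.
by rewrite sum_pred1_mulr // sym.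
Qed.

End ArcMatrices.

Lemma horner_det_scalar_subZ (R : comNzRingType) k (P Q : {poly R}) (A : 'M[R]_k) x :
  (\det (P%:M - Q *: map_mx polyC A)).[x] = \det (P.[x]%:M - Q.[x] *: A).
Proof.
rewrite -horner_evalE -det_map_mx; congr (\det _); apply/matrixP => i j.
by rewrite !mxE /= horner_evalE hornerD hornerN hornerMn hornerM hornerC.
Qed.

Lemma horner_char_poly (R : comNzRingType) k (A : 'M[R]_k) x :
  (char_poly A).[x] = \det (x%:M - A).
Proof.
rewrite /char_poly /char_poly_mx -[map_mx _ A]scale1r horner_det_scalar_subZ.
by rewrite hornerX hornerC scale1r.
Qed.

Lemma horner_cancel_exp (F : fieldType) (s p r : {poly F}) (k l : nat) x :
  s != 0 -> (k <= l)%N \/ s.[x] != 0 -> s ^+ k * p = s ^+ l * r ->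
  p.[x] = s.[x] ^ (l%:Z - k%:Z) * r.[x].
Proof.
move=> s_neq0 hx; have [kl | lk] := leqP k l.
  rewrite -(subnKC kl) exprD -mulrA => /(mulfI (expf_neq0 k s_neq0)) ->.
  by rewrite hornerM horner_exp subzn ?leq_addr // addKn.
have {}sx : s.[x] != 0 by case: hx; rewrite // leqNgt lk.
move=> /(congr1 (horner_eval x)); rewrite !rmorphM !rmorphXn /= !horner_evalE => e.
apply: (mulfI (expf_neq0 k sx)); rewrite e mulrA [s.[x] ^+ k]exprnP -expfzDr //.
by rewrite addrC subrK.
Qed.

Section RegularGraph.

Variables (R : realType) (n : nat) (adj : rel 'I_n) (d : nat).
Hypothesis reg : regular adj d.

Lemma transP_regular : transP R adj = d%:R^-1 *: adjmx R adj.
Proof. by apply/matrixP => u v; rewrite !mxE reg; case: adj; rewrite ?mulr1 ?mulr0. Qed.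

Lemma laplacian_regular : laplacian R adj = d%:R%:M - adjmx R adj.
Proof.
apply/matrixP => u v; rewrite !mxE reg.
by case: eqP => [->|_]; rewrite ?mulr1n ?mulr0n.
Qed.

Lemma adjmxE : adjmx R adj = \matrix_(u, v) (adj u v)%:R.
Proof. by apply/matrixP => u v; rewrite !mxE; case: adj. Qed.

Lemma groverE (a b : R) :
  grover adj a b = ((2 / d%:R - 1) * a + b) *:
    (arc_source_mx R adj *m (arc_target_mx R adj)^T) - b *: arc_rev_mx R adj.
Proof.
apply/matrixP => i j; rewrite !mxE /=; under eq_bigr do rewrite !mxE eq_sym.
rewrite sum_pred1_mulr // reg; case: ifP => [/eqP -> | _] /=.
  by rewrite eqxx mulr1; ring.
by case: ifP; rewrite /= ?mulr1 ?mulr0 ?subr0.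
Qed.

End RegularGraph.

Lemma grover_char_poly (R : realType) n q (adj : rel 'I_n) (a b : R) :
  symmetric adj -> irreflexive adj -> regular adj q.+1 ->
  let beta := (2 / q.+1%:R - 1) * a + b in
  let s := 'X ^+ 2 - b%:P ^+ 2 in
  s ^+ n * char_poly (grover adj a b) =
  s ^+ nedges adj * \det ((s + beta%:P * b%:P * q.+1%:R)%:M -
                          ('X * beta%:P) *: map_mx polyC (adjmx R adj)).
Proof.
move=> sym irr reg beta s.
pose N := map_mx polyC (arc_edge_mx R adj); pose J := map_mx polyC (arc_rev_mx R adj).
pose L := map_mx polyC (arc_source_mx R adj); pose K := map_mx polyC (arc_target_mx R adj).
have NNt : N *m N^T = 1%:M + J.
  by rewrite map_trmx -map_mxM arc_edge_mx_gram // map_mxD map_mx1.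
have NtN : N^T *m N = 2%:M.
  by rewrite map_trmx -map_mxM arc_edge_mx_tr_gram // map_scalar_mx rmorph_nat.
have JJ : J *m J = 1%:M by rewrite -map_mxM arc_rev_mxK // map_mx1.
have JL : J *m L = K by rewrite -map_mxM arc_rev_mx_source.
have KtK : K^T *m K = q.+1%:R%:M.
  by rewrite map_trmx -map_mxM (arc_target_mx_gram _ sym reg) map_scalar_mx rmorph_nat.
have KtL : K^T *m L = map_mx polyC (adjmx R adj).
  by rewrite map_trmx -map_mxM arc_target_source_mx // adjmxE.
have X_sub_neq0 : 'X - b%:P != 0 by rewrite polyXsubC_eq0.
have X_add_neq0 : 'X + b%:P != 0 by rewrite -[b%:P]opprK -polyCN polyXsubC_eq0.
have := det_reversal_reduction_cancel beta%:P (card_arcs sym irr)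
  NNt NtN JJ JL KtK KtL X_sub_neq0 X_add_neq0.
by rewrite /char_poly /char_poly_mx (groverE reg) map_mxB !map_mxZ map_mxM -map_trmx.
Qed.

Theorem corollary3 (R : realType) (n q : nat) (adj : rel 'I_n)
  (a b lam : R) :
  simple_graph adj -> connected_graph adj -> regular adj q.+1 ->
  0 <= a <= 1 ->
  ((n <= nedges adj)%N \/ lam ^+ 2 != b ^+ 2) ->
  let m := nedges adj in
  let Ut := grover adj a b in
  let c1 := (1 - q%:R) * a + b * q%:R in
  let c2 := (1 - q%:R) * a + b * (q%:R + 1) in
  \det (lam%:M - Ut) =
    (lam ^+ 2 - b ^+ 2) ^ (m%:Z - n%:Z) *
      \det ((lam ^+ 2 + b * c1)%:M - lam * c2 *: transP R adj)
  /\
  (lam ^+ 2 - b ^+ 2) ^ (m%:Z - n%:Z) *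
      \det ((lam ^+ 2 + b * c1)%:M - lam * c2 *: transP R adj) =
    (lam ^+ 2 - b ^+ 2) ^ (m%:Z - n%:Z) *
      \det ((lam ^+ 2 - lam * c2 + b * c1)%:M
            + lam * (b - (q%:R - 1) / (q%:R + 1) * a) *: laplacian R adj).
Proof.
move=> [sym irr] _ reg _ n_le_m_or_lam m Ut c1 c2; rewrite {}/c1 {}/c2.
have q1_neq0 : q%:R + 1 != 0 :> R by rewrite natr1 pnatr_eq0.
set s : {poly R} := 'X ^+ 2 - b%:P ^+ 2.
have s_neq0 : s != 0.
  have -> : s = ('X - b%:P) * ('X - (- b)%:P) by rewrite /s polyCN; ring.
  by rewrite mulf_neq0 ?polyXsubC_eq0.
have s_lam : s.[lam] = lam ^+ 2 - b ^+ 2 by rewrite /s !hornerE.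
have s_lam_cond : (n <= m)%N \/ s.[lam] != 0 by rewrite s_lam subr_eq0.
have := grover_char_poly a b sym irr reg; rewrite /= -/s.
move/(horner_cancel_exp s_neq0 s_lam_cond).
rewrite horner_char_poly horner_det_scalar_subZ !hornerE hornerMn hornerE -/m => ->.
rewrite (transP_regular R reg) (laplacian_regular R reg) scalerA -[q.+1%:R]natr1.
split; congr (_ * \det _); last rewrite scalerBr scale_scalar_mx addrA -raddfD /=.
all: by congr (_ - _); [congr _%:M | congr (_ *: _)]; field.
Qed.
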